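(* Let $a,\alpha$ be real numbers with $-1<\alpha<a<1$. Then the solutions $\beta,b$ of the equation $$x^2+(a+\alpha)x+\frac{(a-\alpha)^2}{1-a\alpha}-3=0$$ are real, and, labeling them so that $\beta\le b$, one has $\beta<-1$ and $b>1$. *)

From Stdlib Require Import Reals.

(* A monic quadratic that is negative at a point t has two real roots, one on
   each side of t.  Here the quadratic takes the values
   -(1-a)(1-alpha)(2+a+alpha)/(1-a alpha) at 1 and
   -(1+a)(1+alpha)(2-a-alpha)/(1-a alpha) at -1, both negative when
   |a|, |alpha| < 1, so its roots lie outside [-1, 1]. *)
From Stdlib Require Import Reals Lra Psatz.
Open Scope R_scope.

Definition quad (s c x : R) : R := x ^ 2 + s * x + c.

Definition discr (s c : R) : R := s ^ 2 - 4 * c.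

Section MonicQuadratic.

Variables s c : R.

Lemma quad_complete_square (x : R) :
  4 * quad s c x = (2 * x + s) ^ 2 - discr s c.
Proof. unfold quad, discr; ring. Qed.

Lemma discr_pos_of_quad_neg (t : R) : quad s c t < 0 -> 0 < discr s c.
Proof.
  intro Ht; pose proof (quad_complete_square t); pose proof (pow2_ge_0 (2 * t + s)).
  lra.
Qed.

Hypothesis discr_pos : 0 < discr s c.

Definition root_lo : R := (- s - sqrt (discr s c)) / 2.
Definition root_hi : R := (- s + sqrt (discr s c)) / 2.

Lemma root_lo_lt_hi : root_lo < root_hi.
Proof. pose proof (sqrt_lt_R0 _ discr_pos); unfold root_lo, root_hi; lra. Qed.

Lemma quad_factor (x : R) : quad s c x = (x - root_lo) * (x - root_hi).
Proof.
  pose proof (sqrt_sqrt _ (Rlt_le _ _ discr_pos)) as Hsq.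
  unfold quad, root_lo, root_hi; unfold discr in Hsq |- *; nra.
Qed.

Lemma quad_eq0 (x : R) : quad s c x = 0 <-> x = root_lo \/ x = root_hi.
Proof.
  rewrite quad_factor; split.
  - intro H; apply Rmult_integral in H; lra.
  - intros [-> | ->]; ring.
Qed.

Lemma roots_straddle (t : R) : quad s c t < 0 -> root_lo < t < root_hi.
Proof.
  rewrite quad_factor; pose proof root_lo_lt_hi; intro Ht; split; nra.
Qed.

End MonicQuadratic.

Section ValuesAtUnits.

Variables a alpha : R.
Hypotheses (ha : -1 < a < 1) (halpha : -1 < alpha < 1).

Let q : R := (a - alpha) ^ 2 / (1 - a * alpha).

Lemma one_sub_mul_pos : 0 < 1 - a * alpha.
Proof. nra. Qed.

Lemma quad_at_1 :
  quad (a + alpha) (q - 3) 1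
  = - ((1 - a) * (1 - alpha) * (2 + a + alpha)) / (1 - a * alpha).
Proof. pose proof one_sub_mul_pos; unfold quad, q; field; lra. Qed.

Lemma quad_at_m1 :
  quad (a + alpha) (q - 3) (-1)
  = - ((1 + a) * (1 + alpha) * (2 - a - alpha)) / (1 - a * alpha).
Proof. pose proof one_sub_mul_pos; unfold quad, q; field; lra. Qed.

Lemma quad_at_1_neg : quad (a + alpha) (q - 3) 1 < 0.
Proof.
  rewrite quad_at_1; apply Rdiv_neg_pos; [| exact one_sub_mul_pos].
  assert (0 < (1 - a) * (1 - alpha)) by (apply Rmult_lt_0_compat; lra).
  nra.
Qed.

Lemma quad_at_m1_neg : quad (a + alpha) (q - 3) (-1) < 0.
Proof.
  rewrite quad_at_m1; apply Rdiv_neg_pos; [| exact one_sub_mul_pos].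
  assert (0 < (1 + a) * (1 + alpha)) by (apply Rmult_lt_0_compat; lra).
  nra.
Qed.

End ValuesAtUnits.

Theorem lemma4p2 (a alpha : R) (h1 : -1 < alpha) (h2 : alpha < a) (h3 : a < 1) :
  exists beta b : R,
    beta <= b /\
    (forall x : R,
        x ^ 2 + (a + alpha) * x + (a - alpha) ^ 2 / (1 - a * alpha) - 3 = 0
        <-> (x = beta \/ x = b)) /\
    beta < -1 /\ 1 < b.
Proof.
  assert (ha : -1 < a < 1) by lra.
  assert (halpha : -1 < alpha < 1) by lra.
  set (s := a + alpha); set (c := (a - alpha) ^ 2 / (1 - a * alpha) - 3).
  pose proof (quad_at_1_neg a alpha ha halpha) as Hp1.
  pose proof (quad_at_m1_neg a alpha ha halpha) as Hm1.
  fold s c in Hp1, Hm1.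
  pose proof (discr_pos_of_quad_neg s c 1 Hp1) as HD.
  exists (root_lo s c), (root_hi s c); split; [| split].
  - left; exact (root_lo_lt_hi s c HD).
  - intro x; rewrite <- (quad_eq0 s c HD); unfold quad, s, c.
    split; intro H; rewrite <- H; ring.
  - pose proof (roots_straddle s c HD (-1) Hm1); pose proof (roots_straddle s c HD 1 Hp1).
    lra.
Qed.
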